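(* Let $V$ be an $\mathrm{FI}_G$-module which is presented in finite degree. Then for all $a\ge1$ and $i\ge1$, $$\deg H_i^{D^a}(V)\le \mathrm{dwidth}(V)-1+i-a.$$
   Context: Fix a commutative ring $k$ and a group $G$. $\mathrm{FI}_G$ is the category with objects $[n]$ ($n\ge0$) and morphisms $[n]\to[m]$ the pairs $(f,g)$ with $f$ injective and $g:[n]\to G$ a map of sets; composition $(f,g)\circ(f',g')=(f\circ f',h)$, $h(x)=g'(x)\,g(f'(x))$. $G_n=\mathfrak S_n\wr G$. An $\mathrm{FI}_G$-module is a functor $V:\mathrm{FI}_G\to\mathrm{Mod}_k$, $V_n=V([n])$. $M(n)_m=k[\mathrm{Hom}_{\mathrm{FI}_G}([n],[m])]$; for a $k[G_n]$-module $W$, $M(W)_m=W\otimes_{k[G_n]}k[\mathrm{Hom}_{\mathrm{FI}_G}([n],[m])]$; direct sums of these are relatively projective. $\deg V=\sup\{n:V_n\ne0\}$ ($\sup\emptyset=-\infty$). Generated in degree $\le m$: surjection $\bigoplus M(n_i)\to V$, $n_i\le m$; related in degree $\le r$: exact $0\to K\to M\to V\to0$, $M$ relatively projective, $K$ generated in degree $\le r$; presented in finite degree: both finite. $\Sigma$ sends $[n]\mapsto[n+1]$ and $(f,g)\mapsto(f_+,g_+)$ ($f_+$ extends $f$ by $n+1\mapsto m+1$, $g_+$ extends $g$ by $n+1\mapsto1_G$); $SV=V\circ\Sigma$; $\iota:V\to SV$ is $V(f^n,\mathbf1)$ in degree $n$. $DV=\mathrm{coker}(\iota)$, $D^a$ its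 $a$-th iterate, $H_i^{D^a}$ left derived functors of $D^a$. $\mathrm{dwidth}(V)=\sup_{a\ge1}(\deg H_1^{D^a}(V)+a)\in\mathbb Z\cup\{\pm\infty\}$ (with $-\infty+c=-\infty$). *)

(* Modules are encoded as
   "raw setoid modules": a carrier, an equivalence, operations; all axioms are
   separate Prop predicates.  Quotients (cokernels) are obtained by coarsening
   the equivalence. *)
From HB Require Import structures.
From mathcomp Require Import all_boot all_order all_algebra.
Set Implicit Arguments. Unset Strict Implicit. Unset Printing Implicit Defensive.
Import GRing.Theory.
Local Open Scope ring_scope.

Record AbsGroup := {
  gcar :> Type;
  gmul : gcar -> gcar -> gcar;
  gone : gcar;
  ginv : gcar -> gcar;
  gmulA : forall x y z, gmul x (gmul y z) = gmul (gmul x y) z;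
  gmul1 : forall x, gmul gone x = x;
  gmulg1 : forall x, gmul x gone = x;
  gmulVg : forall x, gmul (ginv x) x = gone;
  gmulgV : forall x, gmul x (ginv x) = gone }.

Inductive ExtZ := NegInf | Fin of int | PosInf.

Definition eaddz (e : ExtZ) (c : int) : ExtZ :=
  match e with Fin z => Fin (z + c) | e' => e' end.

Definition ele (e e' : ExtZ) : Prop :=
  match e, e' with
  | NegInf, _ => True
  | _, PosInf => True
  | Fin z, Fin z' => (z <= z')%R
  | _, _ => False
  end.

Definition ext_lt_nat (e : ExtZ) (n : nat) : Prop :=
  match e with NegInf => True | Fin z => (z < n%:Z)%R | PosInf => False end.

Section FIG.
Variables (k : comPzRingType) (G : AbsGroup).

Record FIHom (n m : nat) := {
  hf : 'I_n -> 'I_m;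
  hinj : injective hf;
  hg : 'I_n -> G }.

Definition FIcomp n m l (phi : FIHom n m) (psi : FIHom l n) : FIHom l m :=
  {| hf := hf phi \o hf psi;
     hinj := inj_comp (@hinj _ _ phi) (@hinj _ _ psi);
     hg := fun x => gmul (hg psi x) (hg phi (hf psi x)) |}.

Definition FIid n : FIHom n n :=
  {| hf := id; hinj := @inj_id _; hg := fun _ => gone G |}.

Definition FIext n m (phi psi : FIHom n m) : Prop :=
  (forall i, hf phi i = hf psi i) /\ (forall i, hg phi i = hg psi i).

Definition plus_f n m (f : 'I_n -> 'I_m) : 'I_n.+1 -> 'I_m.+1 :=
  fun i => match unlift ord_max i with
           | Some j => lift ord_max (f j) | None => ord_max end.

Lemma plus_f_inj n m (f : 'I_n -> 'I_m) : injective f -> injective (plus_f f).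
Proof.
move=> fi i j; rewrite /plus_f.
case: unliftP => [i' ->|->]; case: unliftP => [j' ->|->] //.
- by move/lift_inj/fi => ->.
- by move=> E; have := neq_lift ord_max (f i'); rewrite E eqxx.
- by move=> E; have := neq_lift ord_max (f j'); rewrite -E eqxx.
Qed.

Definition plus_g n (g : 'I_n -> G) : 'I_n.+1 -> G :=
  fun i => match unlift ord_max i with Some j => g j | None => gone G end.

Definition FIplus n m (phi : FIHom n m) : FIHom n.+1 m.+1 :=
  {| hf := plus_f (hf phi); hinj := plus_f_inj (@hinj _ _ phi);
     hg := plus_g (hg phi) |}.

Definition FIiota n : FIHom n n.+1 :=
  {| hf := lift ord_max; hinj := @lift_inj _ ord_max; hg := fun _ => gone G |}.

Record RMod := {
  rc :> Type;
  req : rc -> rc -> Prop;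
  r0 : rc;
  radd : rc -> rc -> rc;
  ropp : rc -> rc;
  rscal : k -> rc -> rc }.

Definition ModAx (M : RMod) : Prop :=
  (((forall x : M, req x x)) /\ ((forall x y : M, req x y -> req y x)) /\ ((forall x y z : M, req x y -> req y z -> req x z)) /\ ((forall x x' y y' : M, req x x' -> req y y' -> req (radd x y) (radd x' y'))) /\ ((forall x x' : M, req x x' -> req (ropp x) (ropp x'))) /\ ((forall c (x x' : M), req x x' -> req (rscal c x) (rscal c x'))) /\ ((forall x y z : M, req (radd x (radd y z)) (radd (radd x y) z))) /\ ((forall x y : M, req (radd x y) (radd y x))) /\ ((forall x : M, req (radd (r0 M) x) x)) /\ ((forall x : M, req (radd (ropp x) x) (r0 M))) /\ ((forall c (x y : M), req (rscal c (radd x y)) (radd (rscal c x) (rscal c y)))) /\ ((forall c d (x : M), req (rscal (c + d) x) (radd (rscal c x) (rscal d x)))) /\ ((forall c d (x : M), req (rscal (c * d) x) (rscal c (rscal d x)))) /\ ((forall x : M, req (rscal 1 x) x))).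

Definition LinAx (M N : RMod) (f : M -> N) : Prop :=
  (((forall x x' : M, req x x' -> req (f x) (f x'))) /\ ((forall x y : M, req (f (radd x y)) (radd (f x) (f y)))) /\ ((forall c (x : M), req (f (rscal c x)) (rscal c (f x))))).

Definition quotIm (M N : RMod) (f : N -> M) : RMod :=
  {| rc := M;
     req := fun x y => exists z, req (radd x (ropp y)) (f z);
     r0 := r0 M; radd := @radd M; ropp := @ropp M; rscal := @rscal M |}.

Record RFI := {
  fv : nat -> RMod;
  fact : forall n m, FIHom n m -> fv n -> fv m }.
Arguments fact r {n m}.

Definition FIAx (V : RFI) : Prop :=
  (((forall n, ModAx (fv V n))) /\ ((forall n m (phi : FIHom n m), LinAx (fact V phi))) /\ ((forall n (x : fv V n), req (fact V (FIid n) x) x)) /\ ((forall n m l (phi : FIHom n m) (psi : FIHom l n) (x : fv V l),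
          req (fact V (FIcomp phi psi) x) (fact V phi (fact V psi x)))) /\ ((forall n m (phi psi : FIHom n m) (x : fv V n),
          FIext phi psi -> req (fact V phi x) (fact V psi x)))).

Definition RHom (V W : RFI) := forall n, fv V n -> fv W n.

Definition IsHom V W (eta : RHom V W) : Prop :=
  (forall n, LinAx (eta n)) /\
  (forall n m (phi : FIHom n m) (x : fv V n),
      req (eta m (fact V phi x)) (fact W phi (eta n x))).

Definition Surj V W (eta : RHom V W) : Prop :=
  forall n (y : fv W n), exists x, req (eta n x) y.

Definition ExactAt U V W (theta : RHom U V) (eta : RHom V W) : Prop :=
  forall n (x : fv V n), req (eta n x) (r0 (fv W n)) <-> exists y, req (theta n y) x.

Definition Projective (P : RFI) : Prop :=
  forall (V W : RFI), FIAx V -> FIAx W ->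
  forall p : RHom W V, IsHom p -> Surj p ->
  forall u : RHom P V, IsHom u ->
  exists u' : RHom P W, IsHom u' /\ forall n x, req (p n (u' n x)) (u n x).

Definition FIshift (V : RFI) : RFI :=
  {| fv := fun n => fv V n.+1;
     fact := fun n m phi => fact V (FIplus phi) |}.

Definition FIiotaV (V : RFI) : RHom V (FIshift V) :=
  fun n => fact V (FIiota n).

Definition FID (V : RFI) : RFI :=
  {| fv := fun n => quotIm (@FIiotaV V n);
     fact := fun n m phi => fact V (FIplus phi) |}.

Definition FIDmap V W (eta : RHom V W) : RHom (FID V) (FID W) :=
  fun n => eta n.+1.

Fixpoint FIDiter (a : nat) (V : RFI) : RFI :=
  match a with 0 => V | a'.+1 => FID (FIDiter a' V) end.

Fixpoint FIDiterMap (a : nat) V W (eta : RHom V W) : RHom (FIDiter a V) (FIDiter a W) :=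
  match a return RHom (FIDiter a V) (FIDiter a W) with
  | 0 => eta
  | a'.+1 => FIDmap (@FIDiterMap a' V W eta) end.

Definition IsProjRes (V : RFI) (P : nat -> RFI) (d : forall i, RHom (P i.+1) (P i))
  (eps : RHom (P 0) V) : Prop :=
  (((forall i, FIAx (P i))) /\ ((forall i, Projective (P i))) /\ ((forall i, IsHom (d i))) /\ (IsHom eps) /\ (Surj eps) /\ (ExactAt (d 0) eps) /\ ((forall i, ExactAt (d i.+1) (d i)))).

(* H_{j+1}(C) vanishes in degree n *)
Definition HZeroS (C : nat -> RFI) (d : forall i, RHom (C i.+1) (C i)) (j n : nat) : Prop :=
  forall x : fv (C j.+1) n, req (d j n x) (r0 (fv (C j) n)) ->
  exists y : fv (C j.+2) n, req (d j.+1 n y) x.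

(* deg H_i^{D^a}(V) <= e, computed from the projective resolution (P,d) of V
   (meaningful for i >= 1): H_i(D^a P_.) vanishes in every degree n > e *)
Definition HDdegLe (P : nat -> RFI) (d : forall i, RHom (P i.+1) (P i))
  (a i : nat) (e : ExtZ) : Prop :=
  forall n, ext_lt_nat e n ->
  @HZeroS (fun j => FIDiter a (P j)) (fun j => @FIDiterMap a _ _ (d j)) i.-1 n.

(* w = dwidth(V) = sup_{a >= 1} (deg H_1^{D^a}(V) + a) in Z u {+-oo} *)
Definition IsDwidth (P : nat -> RFI) (d : forall i, RHom (P i.+1) (P i)) (w : ExtZ) : Prop :=
  (forall a, (1 <= a)%N -> @HDdegLe P d a 1 (eaddz w (- a%:Z))) /\
  (forall w', (forall a, (1 <= a)%N -> @HDdegLe P d a 1 (eaddz w' (- a%:Z))) -> ele w w').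

Section FreeSum.
Variables (I : Type) (ni : I -> nat).
Definition FSel (m : nat) := (k * {i : I & FIHom (ni i) m})%type.

Inductive fseq (m : nat) : seq (FSel m) -> seq (FSel m) -> Prop :=
| fs_refl l : fseq l l
| fs_sym l l' : fseq l l' -> fseq l' l
| fs_trans l1 l2 l3 : fseq l1 l2 -> fseq l2 l3 -> fseq l1 l3
| fs_cat l1 l2 l1' l2' : fseq l1 l1' -> fseq l2 l2' -> fseq (l1 ++ l2) (l1' ++ l2')
| fs_swap x y : fseq [:: x; y] [:: y; x]
| fs_merge c1 c2 t : fseq [:: (c1, t); (c2, t)] [:: (c1 + c2, t)]
| fs_zero t : fseq [:: (0, t)] [::]
| fs_ext c i (phi psi : FIHom (ni i) m) :
    FIext phi psi -> fseq [:: (c, existT _ i phi)] [:: (c, existT _ i psi)].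

Definition FreeMod (m : nat) : RMod :=
  {| rc := seq (FSel m); req := @fseq m; r0 := [::]; radd := fun l l' => l ++ l';
     ropp := map (fun x => (- x.1, x.2));
     rscal := fun c => map (fun x => (c * x.1, x.2)) |}.

Definition FreeSum : RFI :=
  {| fv := FreeMod;
     fact := fun n m phi =>
       map (fun x : FSel n => (x.1, existT _ (tag x.2) (FIcomp phi (tagged x.2)))) |}.
End FreeSum.

Definition GenLe (V : RFI) (r : nat) : Prop :=
  exists (I : Type) (ni : I -> nat), (forall i, (ni i <= r)%N) /\
  exists p : RHom (FreeSum ni) V, IsHom p /\ Surj p.

(* G_n = S_n wr G = Aut_{FI_G}([n]) = FIHom n n (injective self-maps of [n]) *)
Record RGMod (n : nat) := { gm :> RMod; gact : FIHom n n -> gm -> gm }.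
Arguments gact {n} r.

Definition GModAx n (W : RGMod n) : Prop :=
  ((ModAx W) /\ ((forall s, LinAx (gact W s))) /\ ((forall x, req (gact W (FIid n) x) x)) /\ ((forall s t x, req (gact W (FIcomp s t) x) (gact W s (gact W t x)))) /\ ((forall s t x, FIext s t -> req (gact W s x) (gact W t x)))).

Section RelProj.
Variables (I : Type) (ni : I -> nat) (W : forall i, RGMod (ni i)).
Definition PSel (m : nat) := {i : I & (W i * FIHom (ni i) m)%type}.

(* M(W)_m = W (x)_{k[G_n]} k[Hom(n,m)], summed over i *)
Inductive pseq (m : nat) : seq (PSel m) -> seq (PSel m) -> Prop :=
| ps_refl l : pseq l l
| ps_sym l l' : pseq l l' -> pseq l' l
| ps_trans l1 l2 l3 : pseq l1 l2 -> pseq l2 l3 -> pseq l1 l3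
| ps_cat l1 l2 l1' l2' : pseq l1 l1' -> pseq l2 l2' -> pseq (l1 ++ l2) (l1' ++ l2')
| ps_swap x y : pseq [:: x; y] [:: y; x]
| ps_add i w1 w2 phi :
    pseq [:: existT _ i (w1, phi); existT _ i (w2, phi)] [:: existT _ i (radd w1 w2, phi)]
| ps_zero i phi : pseq [:: existT _ i (r0 (W i), phi)] [::]
| ps_eqv i w w' phi : req w w' -> pseq [:: existT _ i (w, phi)] [:: existT _ i (w', phi)]
| ps_ext i w (phi psi : FIHom (ni i) m) :
    FIext phi psi -> pseq [:: existT _ i (w, phi)] [:: existT _ i (w, psi)]
| ps_bal i (s : FIHom (ni i) (ni i)) w phi :
    pseq [:: existT _ i (gact (W i) s w, phi)] [:: existT _ i (w, FIcomp phi s)].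

Definition PMod (m : nat) : RMod :=
  {| rc := seq (PSel m); req := @pseq m; r0 := [::]; radd := fun l l' => l ++ l';
     ropp := map (fun x => existT _ (tag x) (ropp (tagged x).1, (tagged x).2));
     rscal := fun c => map (fun x => existT _ (tag x) (rscal c (tagged x).1, (tagged x).2)) |}.

Definition PSum : RFI :=
  {| fv := PMod;
     fact := fun n m phi =>
       map (fun x : PSel n => existT _ (tag x) ((tagged x).1, FIcomp phi (tagged x).2)) |}.
End RelProj.

Definition RelLe (V : RFI) (r : nat) : Prop :=
  exists (I : Type) (ni : I -> nat) (W : forall i, RGMod (ni i)),
  (forall i, GModAx (W i)) /\
  exists (K : RFI) (iK : RHom K (PSum W)) (pi : RHom (PSum W) V),
  ((FIAx K) /\ (GenLe K r) /\ (IsHom iK) /\ (IsHom pi) /\ ((forall n (x : fv K n), req (iK n x) (r0 _) -> req x (r0 _))) /\ (Surj pi) /\ (ExactAt iK pi)).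

Definition PresentedFinite (V : RFI) : Prop :=
  exists m r, GenLe V m /\ RelLe V r.

End FIG.

From mathcomp Require Import all_boot all_order all_algebra zify.
From Stdlib Require Import Classical ClassicalEpsilon FunctionalExtensionality ProofIrrelevance.
Set Implicit Arguments. Unset Strict Implicit. Unset Printing Implicit Defensive.
Import GRing.Theory.
Local Open Scope ring_scope.

(* For a projective FI_G-module P, the map iota : D^b P -> S D^b P is injective for
   every b.  Indeed P is a retract of the free module on its own elements, and for a
   free module D^b is described by the coefficients on those basis morphisms that
   hit the last b points.  Applying D^b to a projective resolution P_. of V hence
   gives short exact sequences of complexes 0 -> D^b P_. -> S D^b P_. -> D^(b+1) P_. -> 0,
   whose long homology sequence shows that H_(i+1)^(D^(b+1))(V) vanishes in degree n
   as soon as H_i^(D^b)(V) vanishes in degree n and H_(i+1)^(D^b)(V) in degree n + 1.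
   Induction on b and i, starting from H_i(P_.) = 0 for i >= 1 and from the definition
   of dwidth at i = 1, gives the bound. *)

Section RModTheory.
Variables (k : comPzRingType) (M : RMod k).
Hypothesis HM : ModAx M.
Local Notation "x ~ y" := (@req k M x y) (at level 70).
Local Notation "x + y" := (@radd k M x y).
Local Notation "- x" := (@ropp k M x).
Local Notation "0" := (r0 M).

Local Ltac by_axiom := move: HM; do ![case=> ?]; move=> ?; eauto.

Lemma req_refl x : x ~ x. Proof. by_axiom. Qed.
Lemma req_sym x y : x ~ y -> y ~ x. Proof. by_axiom. Qed.
Lemma req_trans x y z : x ~ y -> y ~ z -> x ~ z. Proof. by_axiom. Qed.
Lemma req_add x x' y y' : x ~ x' -> y ~ y' -> x + y ~ x' + y'. Proof. by_axiom. Qed.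
Lemma req_opp x x' : x ~ x' -> - x ~ - x'. Proof. by_axiom. Qed.
Lemma req_scale c x x' : x ~ x' -> rscal c x ~ rscal c x'. Proof. by_axiom. Qed.
Lemma maddrA x y z : x + (y + z) ~ (x + y) + z. Proof. by_axiom. Qed.
Lemma maddrC x y : x + y ~ y + x. Proof. by_axiom. Qed.
Lemma madd0r x : 0 + x ~ x. Proof. by_axiom. Qed.
Lemma maddNr x : (- x) + x ~ 0. Proof. by_axiom. Qed.
Lemma mscalerDr c x y : rscal c (x + y) ~ rscal c x + rscal c y. Proof. by_axiom. Qed.
Lemma mscalerDl c d x : rscal (c + d)%R x ~ rscal c x + rscal d x. Proof. by_axiom. Qed.
Lemma mscalerA c d x : rscal (c * d) x ~ rscal c (rscal d x). Proof. by_axiom. Qed.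
Lemma mscale1r x : rscal 1 x ~ x. Proof. by_axiom. Qed.

Lemma req_addl x y y' : y ~ y' -> x + y ~ x + y'.
Proof. by move=> h; apply: req_add => //; apply: req_refl. Qed.
Lemma req_addr x x' y : x ~ x' -> x + y ~ x' + y.
Proof. by move=> h; apply: req_add => //; apply: req_refl. Qed.
Lemma maddr0 x : x + 0 ~ x. Proof. exact: req_trans (maddrC _ _) (madd0r _). Qed.
Lemma maddrN x : x + (- x) ~ 0. Proof. exact: req_trans (maddrC _ _) (maddNr _). Qed.

Lemma maddKr a x : (- a) + (a + x) ~ x.
Proof. apply: req_trans (maddrA _ _ _) _; apply: req_trans (req_addr _ (maddNr _)) _; exact: madd0r. Qed.

Lemma maddrI a x y : a + x ~ a + y -> x ~ y.
Proof.
move=> h; apply: req_trans (req_sym (maddKr a x)) _; apply: req_trans _ (maddKr a y).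
exact: req_addl.
Qed.

Lemma req_sub0 x y : x ~ y -> x + (- y) ~ 0.
Proof. by move=> h; apply: req_trans (req_addr _ h) _; apply: maddrN. Qed.

Lemma sub0_req x y : x + (- y) ~ 0 -> x ~ y.
Proof.
move=> h; apply: (@maddrI (- y)); apply: req_trans (maddrC _ _) _.
exact: req_trans h (req_sym (maddNr _)).
Qed.

Lemma mopp_of_add0 x y : x + y ~ 0 -> - x ~ y.
Proof. by move=> h; apply: (@maddrI x); apply: req_trans (maddrN _) (req_sym h). Qed.

Lemma mscale0r x : rscal 0%R x ~ 0.
Proof.
apply: (@maddrI (rscal 0%R x)); apply: req_trans (req_sym (mscalerDl _ _ _)) _.
by rewrite addr0; apply: req_sym; apply: maddr0.
Qed.

Lemma mscaler0 c : rscal c 0 ~ 0.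
Proof.
apply: (@maddrI (rscal c 0)); apply: req_trans (req_sym (mscalerDr _ _ _)) _.
apply: req_trans _ (req_sym (maddr0 _)); apply: req_scale; exact: madd0r.
Qed.

Lemma moppr0 : - 0 ~ 0. Proof. exact: req_trans (req_sym (maddr0 _)) (maddNr _). Qed.

Lemma mscaleNr c x : rscal (- c) x ~ - rscal c x.
Proof.
apply: req_sym; apply: mopp_of_add0; apply: req_trans (req_sym (mscalerDl _ _ _)) _.
by rewrite subrr; apply: mscale0r.
Qed.

Lemma mscalerN c x : rscal c (- x) ~ - rscal c x.
Proof.
apply: req_sym; apply: mopp_of_add0; apply: req_trans (req_sym (mscalerDr _ _ _)) _.
exact: req_trans (req_scale _ (maddrN _)) (mscaler0 _).
Qed.

Lemma maddrACA x y z t : (x + y) + (z + t) ~ (x + z) + (y + t).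
Proof.
apply: req_trans (req_sym (maddrA _ _ _)) _; apply: req_trans _ (maddrA _ _ _).
apply: req_addl; apply: req_trans (maddrA _ _ _) _.
exact: req_trans (req_addr _ (maddrC _ _)) (req_sym (maddrA _ _ _)).
Qed.

Lemma mopprD x y : - (x + y) ~ (- x) + (- y).
Proof.
apply: mopp_of_add0; apply: req_trans (maddrACA _ _ _ _) _.
apply: req_trans (req_add (maddrN _) (maddrN _)) _; exact: madd0r.
Qed.

Lemma mopprK x : - (- x) ~ x. Proof. exact/mopp_of_add0/maddNr. Qed.

Lemma mopprB x y : - (x + - y) ~ y + - x.
Proof.
apply: req_trans (mopprD _ _) _.
exact: req_trans (req_addl _ (mopprK _)) (maddrC _ _).
Qed.

Lemma msubr0 x : x + - 0 ~ x.
Proof. exact: req_trans (req_addl _ moppr0) (maddr0 _). Qed.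

Lemma msubrDD x y x' y' : (x + y) + - (x' + y') ~ (x + - x') + (y + - y').
Proof. exact: req_trans (req_addl _ (mopprD _ _)) (maddrACA _ _ _ _). Qed.

Lemma msubrKA x y z : (x + - y) + (y + - z) ~ x + - z.
Proof.
apply: req_trans (req_sym (maddrA _ _ _)) _; apply: req_addl.
exact: req_trans (maddrA _ _ _) (req_trans (req_addr _ (maddNr _)) (madd0r _)).
Qed.

Lemma msubKl x a : (x + - a) + - x ~ - a.
Proof. exact: req_trans (maddrC _ _) (maddKr _ _). Qed.
End RModTheory.

Section LinearTheory.
Variables (k : comPzRingType) (M N : RMod k) (f : M -> N).
Hypotheses (HM : ModAx M) (HN : ModAx N) (Hf : LinAx f).

Lemma lin_req x y : req x y -> req (f x) (f y). Proof. by case: Hf => h _; apply: h. Qed.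
Lemma lin_add x y : req (f (radd x y)) (radd (f x) (f y)). Proof. by case: Hf => _ [h _]. Qed.
Lemma lin_scale c x : req (f (rscal c x)) (rscal c (f x)). Proof. by case: Hf => _ [_ h]. Qed.

Lemma lin_0 : req (f (r0 M)) (r0 N).
Proof.
apply: (maddrI HN (a := f (r0 M))). apply: (req_trans HN) (req_sym HN (lin_add _ _)) _.
exact: (req_trans HN) (lin_req (madd0r HM _)) (req_sym HN (maddr0 HN _)).
Qed.

Lemma lin_opp x : req (f (ropp x)) (ropp (f x)).
Proof.
apply: (req_sym HN); apply: (mopp_of_add0 HN); apply: (req_trans HN) (req_sym HN (lin_add _ _)) _.
exact: (req_trans HN) (lin_req (maddrN HM x)) lin_0.
Qed.

Lemma lin_sub x y : req (f (radd x (ropp y))) (radd (f x) (ropp (f y))).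
Proof. exact: (req_trans HN) (lin_add _ _) (req_addl HN _ (lin_opp y)). Qed.
End LinearTheory.

Local Notation act V := (@fact _ _ V _ _).

Section FIHomTheory.
Variable G : AbsGroup.

Lemma FIext_eq n m (phi psi : FIHom G n m) : FIext phi psi -> phi = psi.
Proof.
case: phi psi => f1 i1 g1 [f2 i2 g2] [/= Hf Hg].
have ef : f1 = f2 by apply: functional_extensionality.
have eg : g1 = g2 by apply: functional_extensionality.
subst f2 g2; by rewrite (proof_irrelevance _ i1 i2).
Qed.

Lemma FIcompA n m l p (phi : FIHom G m l) (psi : FIHom G n m) (chi : FIHom G p n) :
  FIcomp phi (FIcomp psi chi) = FIcomp (FIcomp phi psi) chi.
Proof. by apply: FIext_eq; split => i //=; rewrite gmulA. Qed.

Lemma FIcomp1 n m (phi : FIHom G n m) : FIcomp (FIid G m) phi = phi.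
Proof. by apply: FIext_eq; split => i //=; rewrite gmulg1. Qed.

Lemma gmulIg (x y z : G) : gmul x z = gmul y z -> x = y.
Proof.
move=> /(congr1 (fun t => gmul t (ginv z))).
by rewrite -!gmulA gmulgV !gmulg1.
Qed.

Lemma FIcompI n m l (phi : FIHom G m l) (s s' : FIHom G n m) :
  FIcomp phi s = FIcomp phi s' -> s = s'.
Proof.
move=> e.
have ef i : hf s i = hf s' i.
  by apply: (@hinj _ _ _ phi); have := congr1 (fun t => hf t i) e.
apply: FIext_eq; split => // i.
by apply: (@gmulIg _ _ (hg phi (hf s i))); have := congr1 (fun t => hg t i) e => /=; rewrite ef.
Qed.

Lemma FIplus_comp n m l (phi : FIHom G m l) (psi : FIHom G n m) :
  FIplus (FIcomp phi psi) = FIcomp (FIplus phi) (FIplus psi).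
Proof.
apply: FIext_eq; split => i /=; rewrite /plus_f /plus_g /=;
  case: (unliftP ord_max i) => [j _|_] /=; rewrite ?liftK ?unlift_none /= ?gmul1 ?gmulg1 //.
Qed.

Lemma FIplus_id n : FIplus (FIid G n) = FIid G n.+1.
Proof.
apply: FIext_eq; split => i /=; rewrite /plus_f /plus_g /=;
  by case: (unliftP ord_max i) => [j e|e]; rewrite ?e.
Qed.

Lemma FIplus_iota n m (phi : FIHom G n m) :
  FIcomp (FIplus phi) (FIiota G n) = FIcomp (FIiota G m) phi.
Proof.
apply: FIext_eq; split => i /=; rewrite /plus_f /plus_g /= liftK //.
by rewrite gmul1 gmulg1.
Qed.
End FIHomTheory.

Section FIModuleAxioms.
Variables (k : comPzRingType) (G : AbsGroup) (V : RFI k G).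
Hypothesis HV : FIAx V.

Lemma FI_mod n : ModAx (fv V n). Proof. by case: HV. Qed.
Lemma FI_lin n m (phi : FIHom G n m) : LinAx (act V phi). Proof. by case: HV => _ []. Qed.
Lemma FI_id n (x : fv V n) : req (act V (FIid G n) x) x. Proof. by case: HV => _ [_ []]. Qed.
Lemma FI_comp n m l (phi : FIHom G n m) (psi : FIHom G l n) (x : fv V l) :
  req (act V (FIcomp phi psi) x) (act V phi (act V psi x)).
Proof. by case: HV => _ [_ [_ []]]. Qed.
End FIModuleAxioms.

Section FIHomAxioms.
Variables (k : comPzRingType) (G : AbsGroup) (V W : RFI k G) (eta : RHom V W).
Hypothesis Heta : IsHom eta.

Lemma hom_lin n : LinAx (@eta n). Proof. by case: Heta. Qed.
Lemma hom_nat n m (phi : FIHom G n m) x : req (eta (act V phi x)) (act W phi (eta x)).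
Proof. by case: Heta => _; apply. Qed.
End FIHomAxioms.

Definition pbool (Q : Prop) : bool := if excluded_middle_informative Q then true else false.

Lemma pboolP (Q : Prop) : reflect Q (pbool Q).
Proof. by rewrite /pbool; case: excluded_middle_informative => h; constructor. Qed.

Lemma pbool_iff (Q Q' : Prop) : (Q <-> Q') -> pbool Q = pbool Q'.
Proof. by move=> h; apply/pboolP/pboolP; rewrite h. Qed.

Section FreeOnElements.
Variables (k : comPzRingType) (G : AbsGroup) (P : RFI k G).

(* The free FI_G-module on the elements of P, a sum of copies of M(p), one for each
   x in P_p.  Its elements are formal combinations, compared through their coefficients. *)
Definition basis m := {x : {p : nat & fv P p} & FIHom G (projT1 x) m}.

Definition coef m (e : basis m) (l : seq (k * basis m)) : k :=
  \sum_(x <- l | pbool (x.2 = e)) x.1.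

Definition FreeOnMod m : RMod k :=
  {| rc := seq (k * basis m); req := fun l l' => forall e, coef e l = coef e l';
     r0 := [::]; radd := fun l l' => l ++ l'; ropp := map (fun x => (- x.1, x.2));
     rscal := fun c => map (fun x => (c * x.1, x.2)) |}.

Definition basis_act n m (phi : FIHom G n m) (e : basis n) : basis m :=
  existT _ (tag e) (FIcomp phi (tagged e)).

Definition FreeOn : RFI k G :=
  {| fv := FreeOnMod; fact := fun n m phi => map (fun x => (x.1, basis_act phi x.2)) |}.

Lemma coef_nil m (e : basis m) : coef e [::] = 0. Proof. by rewrite /coef big_nil. Qed.

Lemma coef_cons m (e : basis m) x l :
  coef e (x :: l) = (if pbool (x.2 = e) then x.1 else 0) + coef e l.
Proof. by rewrite /coef big_cons; case: ifP; rewrite ?add0r. Qed.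

Lemma coef_cat m (e : basis m) l l' : coef e (l ++ l') = coef e l + coef e l'.
Proof. by rewrite /coef big_cat. Qed.

Lemma coef_opp m (e : basis m) l : coef e (map (fun x => (- x.1, x.2)) l) = - coef e l.
Proof. by rewrite /coef big_map sumrN. Qed.

Lemma coef_scale m (e : basis m) c l : coef e (map (fun x => (c * x.1, x.2)) l) = c * coef e l.
Proof. by rewrite /coef big_map mulr_sumr. Qed.

Lemma basis_act_inj n m (phi : FIHom G n m) : injective (basis_act phi).
Proof.
case=> [x1 s1] [x2 s2] e.
have ex : x1 = x2 by have := congr1 (@projT1 _ _) e.
subst x2; have := inj_pair2 _ _ _ _ _ e => /= /FIcompI ->.
by [].
Qed.

Lemma basis_act_id n (e : basis n) : basis_act (FIid G n) e = e.
Proof. by rewrite /basis_act FIcomp1; case: e. Qed.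

Lemma basis_act_comp n m l (phi : FIHom G m l) (psi : FIHom G n m) e :
  basis_act (FIcomp phi psi) e = basis_act phi (basis_act psi e).
Proof. by rewrite /basis_act /= FIcompA. Qed.

Lemma coef_act n m (phi : FIHom G n m) e l :
  coef (basis_act phi e) (act FreeOn phi l) = coef e l.
Proof.
rewrite /coef big_map; apply: eq_bigl => x; apply: pbool_iff.
by split=> [/basis_act_inj|->].
Qed.

Lemma coef_act_out n m (phi : FIHom G n m) e l :
  ~ (exists e', basis_act phi e' = e) -> coef e (act FreeOn phi l) = 0.
Proof. by move=> he; rewrite /coef big_map big1 // => x /pboolP hx; case: he; exists x.2. Qed.

Lemma FreeOn_ModAx m : ModAx (FreeOnMod m).
Proof.
do !split => /=.
- by move=> x y h e; rewrite h.
- by move=> x y z h1 h2 e; rewrite h1 h2.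
- by move=> x x' y y' h1 h2 e; rewrite !coef_cat h1 h2.
- by move=> x x' h e; rewrite !coef_opp h.
- by move=> c x x' h e; rewrite !coef_scale h.
- by move=> x y z e; rewrite catA.
- by move=> x y e; rewrite !coef_cat addrC.
- by move=> x e; rewrite coef_cat coef_opp coef_nil addNr.
- by move=> c x y e; rewrite map_cat.
- by move=> c d x e; rewrite coef_cat !coef_scale mulrDl.
- by move=> c d x e; rewrite !coef_scale mulrA.
- by move=> x e; rewrite coef_scale mul1r.
Qed.

Lemma FreeOn_FIAx : FIAx FreeOn.
Proof.
split; first exact: FreeOn_ModAx.
split.
  move=> n m phi; split; last split => /=.
  - move=> x x' h e; have [[e' <-]|he] := classic (exists e', basis_act phi e' = e).
      by rewrite !coef_act h.
    by rewrite !coef_act_out.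
  - by move=> x y e; rewrite map_cat.
  - by move=> c x e; rewrite -!map_comp.
split.
  move=> n x e /=; rewrite (@eq_map _ _ _ id) ?map_id // => -[c e'].
  by rewrite /= basis_act_id.
split; last by move=> n m phi psi x /FIext_eq ->.
move=> n m l phi psi x e /=; rewrite -map_comp; congr coef; apply: eq_map => -[c e'].
by rewrite /= basis_act_comp.
Qed.
End FreeOnElements.

Section Counit.
Variables (k : comPzRingType) (G : AbsGroup) (P : RFI k G).
Hypothesis HP : FIAx P.
Local Notation HM m := (FI_mod HP m).

Definition basis_val m (e : basis P m) : fv P m := act P (tagged e) (projT2 (tag e)).

Definition counit m (l : seq (k * basis P m)) : fv P m :=
  foldr (fun x acc => radd (rscal x.1 (basis_val x.2)) acc) (r0 _) l.

Lemma counit_cat m (l l' : seq (k * basis P m)) :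
  req (counit (l ++ l')) (radd (counit l) (counit l')).
Proof.
elim: l => [|x l IH] /=; first exact: (req_sym (HM m)) (madd0r (HM m) _).
exact: (req_trans (HM m)) (req_addl (HM m) _ IH) (maddrA (HM m) _ _ _).
Qed.

Lemma counit_filter m q (l : seq (k * basis P m)) :
  req (counit l) (radd (counit (filter q l)) (counit (filter (predC q) l))).
Proof.
elim: l => [|x l IH] /=; first exact: (req_sym (HM m)) (madd0r (HM m) _).
apply: (req_trans (HM m)) (req_addl (HM m) _ IH) _.
case: (q x) => /=; first exact: (maddrA (HM m)).
apply: (req_trans (HM m)) (maddrA (HM m) _ _ _) _.
apply: (req_trans (HM m)) (req_addr (HM m) _ (maddrC (HM m) _ _)) _.
exact: (req_sym (HM m)) (maddrA (HM m) _ _ _).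
Qed.

Lemma counit_const m (e : basis P m) (l : seq (k * basis P m)) :
  all (fun y => pbool (y.2 = e)) l -> req (counit l) (rscal (\sum_(y <- l) y.1) (basis_val e)).
Proof.
elim: l => [|x l IH] /=; first by rewrite big_nil => _; apply: (req_sym (HM m)) (mscale0r (HM m) _).
case/andP=> /pboolP ex /IH hl; rewrite big_cons ex.
exact: (req_trans (HM m)) (req_addl (HM m) _ hl) (req_sym (HM m) (mscalerDl (HM m) _ _ _)).
Qed.

Lemma counit_opp m (l : seq (k * basis P m)) :
  req (counit (map (fun x => (- x.1, x.2)) l)) (ropp (counit l)).
Proof.
elim: l => [|x l IH] /=; first exact: (req_sym (HM m)) (moppr0 (HM m)).
apply: (req_trans (HM m)) (req_add (HM m) (mscaleNr (HM m) _ _) IH) _.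
exact: (req_sym (HM m)) (mopprD (HM m) _ _).
Qed.

Lemma counit_scale m c (l : seq (k * basis P m)) :
  req (counit (map (fun x => (c * x.1, x.2)) l)) (rscal c (counit l)).
Proof.
elim: l => [|x l IH] /=; first exact: (req_sym (HM m)) (mscaler0 (HM m) _).
apply: (req_trans (HM m)) (req_add (HM m) (mscalerA (HM m) _ _ _) IH) _.
exact: (req_sym (HM m)) (mscalerDr (HM m) _ _ _).
Qed.

Lemma counit_coef0 m (l : seq (k * basis P m)) :
  (forall e, coef e l = 0) -> req (counit l) (r0 _).
Proof.
have [N] := ubnP (size l); elim: N l => [|N IH] [|x l] //= hs hl; try exact: (req_refl (HM m)).
set q := fun y : k * basis P m => pbool (y.2 = x.2).
have hx : x.1 + \sum_(y <- filter q l) y.1 = 0.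
  by have := hl x.2; rewrite coef_cons (introT (pboolP _) erefl) /coef big_filter.
have same : req (radd (rscal x.1 (basis_val x.2)) (counit (filter q l))) (r0 _).
  apply: (req_trans (HM m)) (req_addl (HM m) _ (counit_const (filter_all q l))) _.
  apply: (req_trans (HM m)) (req_sym (HM m) (mscalerDl (HM m) _ _ _)) _.
  by rewrite hx; apply: (mscale0r (HM m)).
have others : req (counit (filter (predC q) l)) (r0 _).
  apply: IH; first by rewrite size_filter (leq_ltn_trans (count_size _ _)).
  move=> e; rewrite /coef big_filter_cond.
  have [->|ne] := classic (e = x.2).
    by rewrite big1 // => y /andP [/= /pboolP ny /pboolP ey].
  have := hl e; rewrite coef_cons (introF (pboolP _) (nesym ne)) add0r => h0.
  rewrite -[RHS]h0 /coef; apply: eq_bigl => y /=; case: (pboolP (y.2 = e)) => [ey|]; last by rewrite andbF.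
  by rewrite andbT; apply/negP => /pboolP; rewrite ey.
apply: (req_trans (HM m)) (req_addl (HM m) _ (counit_filter q l)) _.
apply: (req_trans (HM m)) (maddrA (HM m) _ _ _) _.
exact: (req_trans (HM m)) (req_add (HM m) same others) (madd0r (HM m) _).
Qed.

Lemma counit_req m (l l' : seq (k * basis P m)) :
  (forall e, coef e l = coef e l') -> req (counit l) (counit l').
Proof.
move=> h; apply: (sub0_req (HM m)).
have h0 : req (counit (l ++ map (fun x => (- x.1, x.2)) l')) (r0 _).
  by apply: counit_coef0 => e; rewrite coef_cat coef_opp h subrr.
apply: (req_trans (HM m)) _ h0; apply: (req_trans (HM m)) _ (req_sym (HM m) (counit_cat _ _)).
exact: (req_addl (HM m)) _ (req_sym (HM m) (counit_opp _)).
Qed.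

Lemma counit_nat n m (phi : FIHom G n m) (l : seq (k * basis P n)) :
  req (counit (act (FreeOn P) phi l)) (act P phi (counit l)).
Proof.
have HL := FI_lin HP phi.
elim: l => [|x l IH] /=; first exact: (req_sym (HM m)) (lin_0 (HM n) (HM m) HL).
apply: (req_trans (HM m)) _ (req_sym (HM m) (lin_add HL _ _)).
apply: (req_add (HM m)) _ IH.
apply: (req_trans (HM m)) _ (req_sym (HM m) (lin_scale HL _ _)).
exact: (req_scale (HM m)) _ (FI_comp HP _ _ _).
Qed.

Lemma counit_IsHom : IsHom (V := FreeOn P) (W := P) counit.
Proof.
split=> [n|n m phi x]; last exact: counit_nat.
split; last split=> [x y|c x]; [exact: counit_req | exact: counit_cat | exact: counit_scale].
Qed.

Lemma counit_Surj : Surj (V := FreeOn P) (W := P) counit.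
Proof.
move=> n y.
exists [:: (1, existT (fun x : {p : nat & fv P p} => FIHom G (projT1 x) n)
                  (existT _ n y) (FIid G n))] => /=.
apply: (req_trans (HM n)) (maddr0 (HM n) _) _.
exact: (req_trans (HM n)) (mscale1r (HM n) _) (FI_id HP _).
Qed.
End Counit.

Section Cokernel.
Variables (k : comPzRingType) (M N : RMod k) (f : N -> M).
Hypotheses (HM : ModAx M) (HN : ModAx N) (Hf : LinAx f).

Lemma req_quotIm (x y : M) : req x y -> @req k (quotIm f) x y.
Proof.
move=> h; exists (r0 N).
exact: (req_trans HM) (req_sub0 HM h) (req_sym HM (lin_0 HN HM Hf)).
Qed.

Lemma quotIm_ModAx : ModAx (quotIm f).
Proof.
split; first by move=> x; apply/req_quotIm/req_refl.
split.
  move=> x y [z hz]; exists (ropp z).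
  apply: (req_trans HM) (req_sym HM (mopprB HM _ _)) _.
  exact: (req_trans HM) (req_opp HM hz) (req_sym HM (lin_opp HN HM Hf _)).
split.
  move=> x y t [z1 h1] [z2 h2]; exists (radd z1 z2).
  apply: (req_trans HM) (req_sym HM (msubrKA HM x y t)) _.
  exact: (req_trans HM) (req_add HM h1 h2) (req_sym HM (lin_add Hf _ _)).
split.
  move=> x x' y y' [z1 h1] [z2 h2]; exists (radd z1 z2).
  apply: (req_trans HM) (msubrDD HM _ _ _ _) _.
  exact: (req_trans HM) (req_add HM h1 h2) (req_sym HM (lin_add Hf _ _)).
split.
  move=> x x' [z h]; exists (ropp z).
  apply: (req_trans HM) (req_sym HM (mopprD HM _ _)) _.
  exact: (req_trans HM) (req_opp HM h) (req_sym HM (lin_opp HN HM Hf _)).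
split.
  move=> c x x' [z h]; exists (rscal c z).
  apply: (req_trans HM) (req_addl HM _ (req_sym HM (mscalerN HM _ _))) _.
  apply: (req_trans HM) (req_sym HM (mscalerDr HM _ _ _)) _.
  exact: (req_trans HM) (req_scale HM _ h) (req_sym HM (lin_scale Hf _ _)).
by do !split=> *; apply: req_quotIm;
  [apply: maddrA | apply: maddrC | apply: madd0r | apply: maddNr | apply: mscalerDr
  | apply: mscalerDl | apply: mscalerA | apply: mscale1r].
Qed.
End Cokernel.

Section Derivative.
Variables (k : comPzRingType) (G : AbsGroup) (V : RFI k G).
Hypothesis HV : FIAx V.

Lemma req_D n (x y : fv V n.+1) : req x y -> @req k (fv (FID V) n) x y.
Proof. exact: (req_quotIm (FI_mod HV _) (FI_mod HV _) (FI_lin HV _)). Qed.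

Lemma D_FIAx : FIAx (FID V).
Proof.
split=> [n|]; first exact: (quotIm_ModAx (FI_mod HV _) (FI_mod HV _) (FI_lin HV _)).
split.
  move=> n m phi; have HF := FI_lin HV (FIplus phi); have HM := FI_mod HV m.+1.
  split; last split=> [x y|c x]; last 2 first.
  - exact/req_D/(lin_add HF).
  - exact/req_D/(lin_scale HF).
  move=> x x' [z h]; exists (act V phi z).
  apply: (req_trans HM) (req_sym HM (lin_sub (FI_mod HV _) HM HF _ _)) _.
  apply: (req_trans HM) (lin_req HF h) _.
  apply: (req_trans HM) (req_sym HM (FI_comp HV _ _ _)) _.
  by rewrite FIplus_iota; apply: FI_comp.
split; first by move=> n x; apply: req_D; rewrite /= FIplus_id; apply: FI_id.
split; first by move=> n m l phi psi x; apply: req_D; rewrite /= FIplus_comp; apply: FI_comp.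
by move=> n m phi psi x /FIext_eq ->; apply: req_D; apply: req_refl (FI_mod HV _) _.
Qed.
End Derivative.

Section DerivativeHom.
Variables (k : comPzRingType) (G : AbsGroup) (V W : RFI k G) (eta : RHom V W).
Hypotheses (HV : FIAx V) (HW : FIAx W) (Heta : IsHom eta).

Lemma D_IsHom : IsHom (FIDmap eta).
Proof.
split=> [n|n m phi x]; last exact/req_D/(hom_nat Heta).
have HE := hom_lin Heta n.+1; have HM := FI_mod HW n.+1.
split; last split=> [x y|c x]; last 2 first.
- exact/req_D/(lin_add HE).
- exact/req_D/(lin_scale HE).
move=> x x' [z h]; exists (eta z).
apply: (req_trans HM) (req_sym HM (lin_sub (FI_mod HV _) HM HE _ _)) _.
exact: (req_trans HM) (lin_req HE h) (hom_nat Heta _ _).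
Qed.
End DerivativeHom.

Lemma Diter_FIAx k G (V : RFI k G) a : FIAx V -> FIAx (FIDiter a V).
Proof. by move=> HV; elim: a => [|a IH] //=; apply: D_FIAx. Qed.

Lemma Diter_IsHom k G (V W : RFI k G) (eta : RHom V W) a :
  FIAx V -> FIAx W -> IsHom eta -> IsHom (FIDiterMap (a := a) eta).
Proof. by move=> HV HW He; elim: a => [|a IH] //=; apply: D_IsHom => //; apply: Diter_FIAx. Qed.

(* [fv (FIDiter a V) m] is [fv V (Ddeg a m)] by conversion, and a morphism [phi]
   acts on it through [FIplusn a phi]. *)
Fixpoint Ddeg (a n : nat) : nat := if a is a'.+1 then Ddeg a' n.+1 else n.

Lemma DdegE a n : Ddeg a n = (n + a)%N.
Proof. by elim: a n => [|a IH] n /=; rewrite ?addn0 ?IH ?addSnnS. Qed.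

Fixpoint FIplusn (G : AbsGroup) (a : nat) : forall n m, FIHom G n m -> FIHom G (Ddeg a n) (Ddeg a m) :=
  if a is a'.+1 return forall n m, FIHom G n m -> FIHom G (Ddeg a n) (Ddeg a m)
  then fun n m phi => FIplusn a' (FIplus phi) else fun n m phi => phi.

Lemma FIplusn_bump (G : AbsGroup) a n (phi : FIHom G n n.+1) q : (q <= n)%N ->
  (forall i, val (hf phi i) = bump q i) -> (forall i, hg phi i = gone G) ->
  (forall i, val (hf (FIplusn a phi) i) = bump q i) /\ (forall i, hg (FIplusn a phi) i = gone G).
Proof.
elim: a n phi => [|a IH] n phi hq hf1 hg1 //=.
apply: IH => [|i|i] /=; first exact: leqW.
  rewrite /plus_f; case: (unliftP ord_max i) => [j ->|->].
    by rewrite !lift_max hf1.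
  by rewrite /= /bump hq.
by rewrite /plus_g; case: (unliftP ord_max i).
Qed.

Lemma FIplusn_iota (G : AbsGroup) a n :
  (forall i, val (hf (FIplusn a (FIiota G n)) i) = bump n i) /\
  (forall i, hg (FIplusn a (FIiota G n)) i = gone G).
Proof. exact: FIplusn_bump. Qed.

Section CoefficientModel.
Variables (k : comPzRingType) (G : AbsGroup) (P : RFI k G).

Definition hits_top a m (e : basis P (Ddeg a m)) : Prop :=
  forall j : 'I_(Ddeg a m), (m <= j)%N -> exists i, hf (tagged e) i = j.

(* An FI_G-module U whose degree-m elements are determined by their coefficients
   [c m x e] on the basis elements e of [FreeOn P] in degree m + a that hit the
   top a points: this is how [FIDiter a (FreeOn P)] looks, the other basis
   elements being killed by the quotients. *)
Record coef_model (U : RFI k G) a (c : forall m, fv U m -> basis P (Ddeg a m) -> k) : Prop := {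
  cm_req : forall m (x y : fv U m), req x y <-> forall e, @hits_top a m e -> c m x e = c m y e;
  cm_0 : forall m e, c m (r0 _) e = 0;
  cm_add : forall m (x y : fv U m) e, c m (radd x y) e = c m x e + c m y e;
  cm_opp : forall m (x : fv U m) e, c m (ropp x) e = - c m x e;
  cm_act : forall n m (phi : FIHom G n m) (x : fv U n) e,
    c m (act U phi x) (basis_act (FIplusn a phi) e) = c n x e;
  cm_act_out : forall n m (phi : FIHom G n m) (x : fv U n) e,
    ~ (exists e', basis_act (FIplusn a phi) e' = e) -> c m (act U phi x) e = 0;
  cm_pull : forall n m (phi : FIHom G n m) (x : fv U m), exists z : fv U n,
    forall e, c n z e = c m x (basis_act (FIplusn a phi) e) }.

Definition basis_pre n m (phi : FIHom G n m) (e : basis P m) : option (basis P n) :=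
  match excluded_middle_informative (exists e', basis_act phi e' = e) with
  | left H => Some (proj1_sig (constructive_indefinite_description _ H))
  | right _ => None end.

Lemma basis_pre_some n m (phi : FIHom G n m) e e' :
  basis_pre phi e = Some e' -> basis_act phi e' = e.
Proof.
rewrite /basis_pre; case: excluded_middle_informative => // H [<-].
exact: proj2_sig (constructive_indefinite_description _ H).
Qed.

Lemma basis_pre_none n m (phi : FIHom G n m) e :
  basis_pre phi e = None -> ~ exists e', basis_act phi e' = e.
Proof. by rewrite /basis_pre; case: excluded_middle_informative. Qed.

Fixpoint pullback n m (phi : FIHom G n m) (l : seq (k * basis P m)) : seq (k * basis P n) :=
  if l is x :: l' then
    if basis_pre phi x.2 is Some e' then (x.1, e') :: pullback phi l' else pullback phi l'
  else [::].

Lemma coef_pullback n m (phi : FIHom G n m) l e : coef e (pullback phi l) = coef (basis_act phi e) l.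
Proof.
elim: l => [|x l IH] /=; first by rewrite !coef_nil.
case E1 : (basis_pre phi x.2) => [e1|]; rewrite !coef_cons IH.
  have <- := basis_pre_some E1; congr (_ + _) => /=.
  by rewrite (@pbool_iff (e1 = e) (basis_act phi e1 = basis_act phi e)) //; split=> [->|/basis_act_inj].
have -> : pbool (x.2 = basis_act phi e) = false.
  by apply/pboolP => h; apply: (basis_pre_none E1); exists e.
by rewrite add0r.
Qed.

Lemma coef_model_FreeOn : @coef_model (FreeOn P) 0 (fun m x e => coef e x).
Proof.
split=> //.
- move=> m x y; split=> [h e _|h e]; first exact: h.
  by apply: h => j; rewrite leqNgt ltn_ord.
- by move=> m e; apply: coef_nil.
- by move=> m x y e; apply: coef_cat.
- by move=> m x e; apply: coef_opp.
- by move=> n m phi x e; apply: coef_act.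
- by move=> n m phi x e; apply: coef_act_out.
- by move=> n m phi x; exists (pullback phi x) => e; apply: coef_pullback.
Qed.

Section DerivativeStep.
Variable a : nat.
Local Notation iota_a m := (FIplusn a (FIiota G m)).

Lemma hits_top_weaken m (e : basis P (Ddeg a.+1 m)) : @hits_top a.+1 m e -> @hits_top a m.+1 e.
Proof. by move=> he j hj; apply/he/ltnW. Qed.

Lemma hits_top_iota_out m (e : basis P (Ddeg a.+1 m)) :
  @hits_top a.+1 m e -> ~ exists e', basis_act (iota_a m) e' = e.
Proof.
have hm : (m < Ddeg a m.+1)%N by rewrite DdegE; lia.
move=> he [e' ee]; subst e; have [i /(congr1 val) /=] := he (Ordinal hm) (leqnn m).
by rewrite (FIplusn_iota G a m).1 => hb; move: (neq_bump m (hf (tagged e') i)); rewrite hb eqxx.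
Qed.

Lemma iota_factor m (e : basis P (Ddeg a m.+1)) :
  (forall i, val (hf (tagged e) i) != m) -> exists e', basis_act (iota_a m) e' = e.
Proof.
move=> hne.
have H i : exists i' : 'I_(Ddeg a m), hf (iota_a m) i' = hf (tagged e) i.
  set v := val (hf (tagged e) i).
  have hu : (unbump m v < Ddeg a m)%N.
    have hv : (v < Ddeg a m.+1)%N := ltn_ord _.
    have hvm : v != m := hne i.
    by move: hv hvm; rewrite !DdegE /unbump; case: ltnP => /=; lia.
  exists (Ordinal hu); apply: val_inj => /=.
  by rewrite (FIplusn_iota G a m).1 /= unbumpK //; apply: hne.
pose f i := proj1_sig (constructive_indefinite_description _ (H i)).
have fP i : hf (iota_a m) (f i) = hf (tagged e) i.
  exact: proj2_sig (constructive_indefinite_description _ (H i)).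
have finj : injective f by move=> i1 i2 h; apply: (@hinj _ _ _ (tagged e)); rewrite -!fP h.
exists (existT _ (tag e) {| hf := f; hinj := finj; hg := hg (tagged e) |}).
rewrite /basis_act /=.
have -> : FIcomp (iota_a m) {| hf := f; hinj := finj; hg := hg (tagged e) |} = tagged e.
  apply: FIext_eq; split=> i /=; first exact: fP.
  by rewrite (FIplusn_iota G a m).2 gmulg1.
by case: e {hne H f fP finj}.
Qed.

Lemma hits_top_step m (e : basis P (Ddeg a m.+1)) :
  @hits_top a m.+1 e -> ~ (exists e', basis_act (iota_a m) e' = e) -> @hits_top a.+1 m e.
Proof.
move=> he nf j hj; case: (ltnP m j) => hmj; first exact: he.
have ej : nat_of_ord j = m by apply/eqP; rewrite eqn_leq hmj hj.
apply: NNPP => nj; apply: nf; apply: iota_factor => i; apply/eqP => h; apply: nj.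
by exists i; apply: val_inj; rewrite h; apply: esym.
Qed.

Lemma hits_top_iota n (e : basis P (Ddeg a n)) :
  @hits_top a n e -> @hits_top a n.+1 (basis_act (iota_a n) e).
Proof.
move=> he j hj.
have hu : (unbump n j < Ddeg a n)%N.
  move: (ltn_ord j) hj; rewrite /unbump; move: (nat_of_ord j) => v.
  by rewrite !DdegE; case: ltnP => /=; lia.
have [|i hi] := he (Ordinal hu); first by move: hj; rewrite /= /unbump; case: ltnP => /=; lia.
exists i; apply: val_inj => /=.
by rewrite hi (FIplusn_iota G a n).1 /= unbumpK //; apply/eqP => h; move: hj; rewrite h; lia.
Qed.

Variables (U : RFI k G) (c : forall m, fv U m -> basis P (Ddeg a m) -> k).
Hypothesis HU : @coef_model U a c.

(* Quotienting by the image of iota amounts to forgetting the coefficients of the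
   basis elements that factor through iota, i.e. that miss the point m. *)
Lemma coef_model_D : @coef_model (FID U) a.+1 (fun m x e => @c m.+1 x e).
Proof.
case: HU => Hreq H0 Hadd Hopp Hact Hout Hpull; split; last 6 first.
- by move=> m; apply: H0.
- by move=> m; apply: Hadd.
- by move=> m; apply: Hopp.
- by move=> n m phi; apply: (Hact _ _ (FIplus phi)).
- by move=> n m phi; apply: (Hout _ _ (FIplus phi)).
- by move=> n m phi; apply: (Hpull _ _ (FIplus phi)).
move=> m x y; split.
  move=> [z /Hreq hz] e he; have := hz e (hits_top_weaken he).
  by rewrite Hadd Hopp (Hout _ _ _ _ _ (hits_top_iota_out he)) => /eqP; rewrite subr_eq0 => /eqP.
move=> h; have [z hz] := Hpull _ _ (FIiota G m) (radd x (ropp y)).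
exists z; apply/Hreq => e he.
have [[e' <-]|ne] := classic (exists e', basis_act (iota_a m) e' = e); first by rewrite Hact hz.
by rewrite (Hout _ _ _ _ _ ne) Hadd Hopp (h e (hits_top_step he ne)) subrr.
Qed.

Lemma coef_model_iota_inj n (x : fv U n) : req (act U (FIiota G n) x) (r0 _) -> req x (r0 _).
Proof.
case: HU => Hreq H0 _ _ Hact _ _ /Hreq h; apply/Hreq => e he.
by rewrite H0 -(Hact _ _ (FIiota G n)) h ?H0 //; apply: hits_top_iota.
Qed.
End DerivativeStep.
End CoefficientModel.

Fixpoint coef_iter (k : comPzRingType) (G : AbsGroup) (P : RFI k G) (a : nat) :
    forall m, fv (FIDiter a (FreeOn P)) m -> basis P (Ddeg a m) -> k :=
  if a is a'.+1 return forall m, fv (FIDiter a (FreeOn P)) m -> basis P (Ddeg a m) -> k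
  then fun m x e => @coef_iter k G P a' m.+1 x e else fun m x e => coef e x.

Lemma coef_model_Diter k G (P : RFI k G) a :
  @coef_model k G P (FIDiter a (FreeOn P)) a (@coef_iter k G P a).
Proof. by elim: a => [|a IH]; [apply: coef_model_FreeOn | apply: coef_model_D]. Qed.

Section Retraction.
Variables (k : comPzRingType) (G : AbsGroup) (V U : RFI k G).
Hypothesis HV : FIAx V.

Lemma IsHom_id : IsHom (fun n (x : fv V n) => x).
Proof.
split=> [n|n m phi x]; last exact: (req_refl (FI_mod HV m)).
by split=> [//|]; split=> *; apply: (req_refl (FI_mod HV n)).
Qed.

Lemma Diter_retract (s : RHom V U) (p : RHom U V) :
  (forall n x, req (p n (s n x)) x) ->
  forall b n (x : fv (FIDiter b V) n), req (FIDiterMap p (FIDiterMap s x)) x.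
Proof.
move=> h b; elim: b => [|b IH] n x //=.
by apply: req_D; [apply: Diter_FIAx | apply: IH].
Qed.
End Retraction.

Lemma Diter_comp0 k G (V U X : RFI k G) (f : RHom U X) (g : RHom V U) : FIAx X ->
  (forall n x, req (f n (g n x)) (r0 _)) ->
  forall b n (x : fv (FIDiter b V) n), req (FIDiterMap f (FIDiterMap g x)) (r0 _).
Proof.
move=> HX h b; elim: b => [|b IH] n x //=.
by apply: req_D; [apply: Diter_FIAx | apply: IH].
Qed.

Lemma Diter_iota_inj_projective k G (P : RFI k G) : FIAx P -> Projective P ->
  forall b n (x : fv (FIDiter b P) n),
  req (act (FIDiter b P) (FIiota G n) x) (r0 _) -> req x (r0 _).
Proof.
move=> HP Hproj b n x hx.
have HF := FreeOn_FIAx P.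
have [s [Hs sK]] := Hproj P (FreeOn P) HP HF _ (counit_IsHom HP) (counit_Surj HP) _ (IsHom_id HP).
have HDP := FI_mod (Diter_FIAx b HP).
have HDF := FI_mod (Diter_FIAx b HF).
have Hsb := Diter_IsHom b HP HF Hs.
have Hpb := Diter_IsHom b HF HP (counit_IsHom HP).
have hsx : req (act (FIDiter b (FreeOn P)) (FIiota G n) (FIDiterMap s x)) (r0 _).
  apply: (req_trans (HDF _)) (req_sym (HDF _) (hom_nat Hsb _ _)) _.
  exact: (req_trans (HDF _)) (lin_req (hom_lin Hsb _) hx) (lin_0 (HDP _) (HDF _) (hom_lin Hsb _)).
have sx0 := coef_model_iota_inj (coef_model_Diter P b) hsx.
apply: (req_trans (HDP _)) (req_sym (HDP _) (Diter_retract HP sK x)) _.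
exact: (req_trans (HDP _)) (lin_req (hom_lin Hpb _) sx0) (lin_0 (HDF _) (HDP _) (hom_lin Hpb _)).
Qed.

Section ConnectingMorphism.
Variables (k : comPzRingType) (G : AbsGroup) (Q : nat -> RFI k G).
Variable dQ : forall j, RHom (Q j.+1) (Q j).
Hypotheses (HQ : forall j, FIAx (Q j)) (HdQ : forall j, IsHom (@dQ j)).
Hypothesis dQK : forall j n x, req (@dQ j n (@dQ j.+1 n x)) (r0 _).
Hypothesis iota_inj :
  forall j n (x : fv (Q j) n), req (act (Q j) (FIiota G n) x) (r0 _) -> req x (r0 _).

Lemma HZeroS_D j n :
  HZeroS dQ j n -> HZeroS dQ j.+1 n.+1 -> HZeroS (fun j => FIDmap (@dQ j)) j.+1 n.
Proof.
move=> H0 H1 x [z hz].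
have M1 := FI_mod (HQ j.+1) n.+1; have M2 := FI_mod (HQ j.+2) n.+1.
have Mj := FI_mod (HQ j) n.+1; have M2n := FI_mod (HQ j.+2) n.
have dx : req (@dQ j.+1 n.+1 x) (act (Q j.+1) (FIiota G n) z).
  exact: (req_trans M1) (req_sym M1 (msubr0 M1 _)) hz.
have dz0 : req (@dQ j n z) (r0 _).
  apply: iota_inj; apply: (req_trans Mj) (req_sym Mj (hom_nat (HdQ j) _ _)) _.
  exact: (req_trans Mj) (lin_req (hom_lin (HdQ j) _) (req_sym M1 dx)) (dQK _).
have [u du] := H0 z dz0.
have dxu : req (@dQ j.+1 n.+1 (radd x (ropp (act (Q j.+2) (FIiota G n) u)))) (r0 _).
  apply: (req_trans M1) (lin_sub M2 M1 (hom_lin (HdQ j.+1) _) _ _) _.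
  apply: (req_sub0 M1); apply: (req_trans M1) dx _.
  apply: (req_trans M1) (lin_req (FI_lin (HQ j.+1) _) (req_sym (FI_mod (HQ j.+1) n) du)) _.
  exact: (req_sym M1) (hom_nat (HdQ j.+1) _ _).
have [y dy] := H1 _ dxu.
exists y, (ropp u).
apply: (req_trans M2) (req_addr M2 _ dy) _.
exact: (req_trans M2) (msubKl M2 _ _) (req_sym M2 (lin_opp M2n M2 (FI_lin (HQ j.+2) _) _)).
Qed.
End ConnectingMorphism.

Lemma ext_lt_nat_eaddzS w (c c' : int) n :
  c' = c + 1 -> ext_lt_nat (eaddz w c) n -> ext_lt_nat (eaddz w c') n.+1.
Proof. by move=> ->; case: w => //= z; lia. Qed.

Section ResolutionBound.
Variables (k : comPzRingType) (G : AbsGroup) (P : nat -> RFI k G).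
Variable d : forall i, RHom (P i.+1) (P i).
Hypotheses (HP : forall i, FIAx (P i)) (Hproj : forall i, Projective (P i)).
Hypotheses (Hd : forall i, IsHom (@d i)) (Hex : forall i, ExactAt (@d i.+1) (@d i)).

Lemma HZeroS_resolution j n : HZeroS d j n.
Proof. by move=> x /(Hex x).1. Qed.

Lemma HZeroS_Diter_step b j n :
  HZeroS (fun j => FIDiterMap (a := b) (@d j)) j n ->
  HZeroS (fun j => FIDiterMap (a := b) (@d j)) j.+1 n.+1 ->
  HZeroS (fun j => FIDiterMap (a := b.+1) (@d j)) j.+1 n.
Proof.
apply: HZeroS_D => [i|i|i m x|i m x].
- exact: Diter_FIAx.
- exact: Diter_IsHom.
- apply: (Diter_comp0 (HP i)) => {}m {}x.
  by apply: (Hex _).2; exists x; apply: (req_refl (FI_mod (HP i.+1) m)).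
- exact: Diter_iota_inj_projective.
Qed.

Variable w : ExtZ.
Hypothesis Hw : forall a, (1 <= a)%N -> HDdegLe d a 1 (eaddz w (- a%:Z)).

Lemma HDdegLe_Diter b i : (1 <= i)%N -> HDdegLe d b.+1 i (eaddz w (- 1 + i%:Z - b.+1%:Z)).
Proof.
elim: b i => [|b IH] [|[|j]] // _.
- by rewrite (_ : - 1 + _ - _ = - 1%:Z) //; apply: Hw.
- by move=> n _; apply: HZeroS_Diter_step; apply: HZeroS_resolution.
- by rewrite (_ : - 1 + _ - _ = - b.+2%:Z); [apply: Hw | lia].
move=> n hn; apply: HZeroS_Diter_step.
  by apply: (IH j.+1) => //; rewrite (_ : - 1 + _ - _ = - 1 + j.+2%:Z - b.+2%:Z) //; lia.
by apply: (IH j.+2 isT n.+1); apply: ext_lt_nat_eaddzS hn; lia.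
Qed.
End ResolutionBound.

Theorem mainTheorem10 (k : comPzRingType) (G : AbsGroup) (V : RFI k G)
  (HV : FIAx V) (Hpres : PresentedFinite V)
  (P : nat -> RFI k G) (d : forall i, RHom (P i.+1) (P i)) (eps : RHom (P 0%N) V)
  (Hres : @IsProjRes k G V P d eps)
  (w : ExtZ) (Hw : @IsDwidth k G P d w) :
  forall a i : nat, (1 <= a)%N -> (1 <= i)%N ->
    @HDdegLe k G P d a i (eaddz w (- 1 + i%:Z - a%:Z)).
Proof.
case: Hres => HP [Hproj [Hd [_ [_ [_ Hex]]]]].
by move=> [|b] i // _; apply: (HDdegLe_Diter HP Hproj Hd Hex Hw.1).
Qed.
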